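(* Let $\ell\ge 1$ and let $G$ be a cyclically $\ell$-edge-connected cubic graph with at least $2\ell+2$ vertices. Let $v_1v_2v_3v_4$ be a path in $G$ (on four distinct vertices), let $v_1'$ be the neighbor of $v_2$ different from $v_1$ and $v_3$, and let $v_4'$ be the neighbor of $v_3$ different from $v_2$ and $v_4$. Let $G'$ be the graph obtained from $G$ by splitting off the path $v_1v_2v_3v_4$. If $E(A',B')$ is a cyclic $\ell'$-edge-cut of $G'$ with $\ell'<\ell$, then $\ell'\ge \ell-2$, and neither the edge $v_1v_4$ nor the edge $v_1'v_4'$ belongs to $E(A',B')$.
   Context: Graphs may have parallel edges. For a partition $\{A,B\}$ of $V(G)$, $E(A,B)$ is the set of edges with one end in $A$ and the other in $B$; it is an $\ell$-edge-cut if it has exactly $\ell$ edges, and it is cyclic if both $G[A]$ and $G[B]$ contain a cycle. $G$ is cyclically $\ell$-edge-connected if it has no cyclic edge-cut of size less than $\ell$. Splitting off a path $v_1v_2v_3v_4$ in a cubic graph $G$: remove the vertices $v_2,v_3$ (with incident edges) and add the edges $v_1v_4$ and $v_1'v_4'$, where $v_1'$ is the neighbor of $v_2$ other than $v_1,v_3$ and $v_4'$ is the neighbor of $v_3$ other than $v_2,v_4$. *)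

From mathcomp Require Import all_boot.
Set Implicit Arguments. Unset Strict Implicit. Unset Printing Implicit Defensive.

(* A finite multigraph: vertex type, edge type, and the (unordered) pair of
   ends of each edge, given as an ordered pair.  A loop has equal ends. *)
Record mgraph := MGraph { gV : finType; gE : finType; gends : gE -> gV * gV }.

Section Graphs.
Variable G : mgraph.
Implicit Types (x y : gV G) (e : gE G) (A : {set gV G}).

Definition joins e x y : bool :=
  (gends e == (x, y)) || (gends e == (y, x)).

Definition adj x y : Prop := exists e, joins e x y.

(* degree: a loop counts twice *)
Definition deg x : nat :=
  #|[set e | (gends e).1 == x]| + #|[set e | (gends e).2 == x]|.

Definition cubic : Prop := forall x, deg x = 3.

(* G[A] contains a cycle: k+1 distinct vertices x_0..x_k in A and k+1
   distinct edges e_0..e_k with e_i joining x_i and x_{i+1 mod (k+1)}.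
   (k = 0: a loop; k = 1: two parallel edges.) *)
Definition has_cycle_in A : Prop :=
  exists (k : nat) (x : 'I_k.+1 -> gV G) (e : 'I_k.+1 -> gE G),
    injective x /\ injective e /\
    forall i, x i \in A /\ joins (e i) (x i) (x (ordS i)).

(* E(A, B) for the partition {A, B = V \ A} *)
Definition cut A : {set gE G} :=
  [set e | ((gends e).1 \in A) != ((gends e).2 \in A)].

Definition cyclic_cut A : Prop := has_cycle_in A /\ has_cycle_in (~: A).

Definition cyc_edge_conn (l : nat) : Prop :=
  forall A, cyclic_cut A -> l <= #|cut A|.

End Graphs.

Section SplitOff.
Variables (G : mgraph) (v1 v2 v3 v4 v1' v4' : gV G).

Definition keepV : pred (gV G) := fun v => (v != v2) && (v != v3).
Definition keepE : pred (gE G) :=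
  fun e => keepV (gends e).1 && keepV (gends e).2.

Lemma keepE1 (e : {e : gE G | keepE e}) : keepV (gends (val e)).1.
Proof. by case: e => e /= /andP []. Qed.
Lemma keepE2 (e : {e : gE G | keepE e}) : keepV (gends (val e)).2.
Proof. by case: e => e /= /andP []. Qed.

Definition so_V : finType := {v : gV G | keepV v}.
Definition so_E : finType := ({e : gE G | keepE e} + bool)%type.

Variables (h1 : keepV v1) (h4 : keepV v4) (h1' : keepV v1') (h4' : keepV v4').

(* inr true is the new edge v1v4, inr false the new edge v1'v4' *)
Definition so_ends (x : so_E) : so_V * so_V :=
  match x with
  | inl e => (exist _ (gends (val e)).1 (keepE1 e),
              exist _ (gends (val e)).2 (keepE2 e))
  | inr true => (exist _ v1 h1, exist _ v4 h4)
  | inr false => (exist _ v1' h1', exist _ v4' h4')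
  end.

Definition split_off : mgraph := MGraph so_ends.

Definition new_edge_v1v4 : gE split_off := inr true.
Definition new_edge_v1'v4' : gE split_off := inr false.

End SplitOff.

From mathcomp Require Import all_boot zify.
From Stdlib Require Import Classical.
Set Implicit Arguments. Unset Strict Implicit. Unset Printing Implicit Defensive.

(* Put v2 and v3 back on either side of a cyclic cut of G', replacing each new edge by the
   path of G it shortcuts: a cycle through a new edge survives when v2 and v3 both join its
   side. Comparing the resulting cuts of G with the cyclic connectivity l forces each new
   edge to have both ends on one side, the two edges lying on opposite sides. Putting v2, v3
   on one side then yields a cut of G with exactly two more edges, which is cyclic as soon
   as some side of G' has a cycle avoiding the new edges. Otherwise both sides are forests
   in the cubic graph G, so each has at least (its size + 2) cut edges, which contradicts
   |V(G)| >= 2l + 2. Cycles are handled through leafless edge sets, which exist exactly when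
   a cycle does. *)

Lemma set3P (T : finType) (x a b c : T) :
  reflect [\/ x = a, x = b | x = c] (x \in [set a; b; c]).
Proof.
rewrite !inE; apply: (iffP idP) => [/orP [/orP [] | ] /eqP ->|[] ->]; rewrite ?eqxx ?orbT //.
- exact: Or31.
- exact: Or32.
- exact: Or33.
Qed.

Section Multigraph.
Variable G : mgraph.
Implicit Types (x y z v w : gV G) (g h : gE G) (X : {set gV G}) (D : {set gE G}).

Definition touches g v := ((gends g).1 == v) || ((gends g).2 == v).

Definition other_end g v := if (gends g).1 == v then (gends g).2 else (gends g).1.

Definition inside X : {set gE G} :=
  [set g | ((gends g).1 \in X) && ((gends g).2 \in X)].

(* D spans a nonempty subgraph of minimum degree at least 2 (a loop counting twice). *)
Definition leafless D : Prop :=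
  (exists g, g \in D) /\
  forall v, (exists2 g, g \in D & touches g v) ->
    (exists2 g, g \in D & joins g v v) \/
    (exists g1 g2, [/\ g1 \in D, g2 \in D, g1 != g2, touches g1 v & touches g2 v]).

Lemma joins_sym g x y : joins g x y = joins g y x.
Proof. by rewrite /joins orbC. Qed.

Lemma joins_touches g x y : joins g x y -> touches g x /\ touches g y.
Proof.
rewrite /joins /touches; case: (gends g) => a b /orP [] /eqP [-> ->];
  by rewrite !eqxx ?orbT.
Qed.

Lemma touches_joins g x y v : joins g x y -> touches g v -> v = x \/ v = y.
Proof.
rewrite /joins /touches; case: (gends g) => a b.
by case/orP=> /eqP [-> ->] /= /orP [] /eqP <-; auto.
Qed.

Lemma joins_ends g a b c d : joins g a b -> joins g c d ->
  (a = c /\ b = d) \/ (a = d /\ b = c).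
Proof.
rewrite /joins; case: (gends g) => p q.
by case/orP=> /eqP [-> ->] /orP [] /eqP [-> ->]; auto.
Qed.

Lemma joinsE g x y : joins g x y =
  ((gends g).1 == x) && ((gends g).2 == y) || ((gends g).1 == y) && ((gends g).2 == x).
Proof. by rewrite /joins; case: (gends g) => a b; rewrite !xpair_eqE. Qed.

Lemma edge_neq g g' a b c d : joins g a b -> joins g' c d ->
  ~ (a = c /\ b = d) -> ~ (a = d /\ b = c) -> g <> g'.
Proof. by move=> Hg Hg' N1 N2 E; subst g'; case: (joins_ends Hg Hg'). Qed.

Lemma touches_deg3 v a b c g ga gb gc : deg v = 3 ->
  joins ga v a -> joins gb v b -> joins gc v c ->
  ga <> gb -> ga <> gc -> gb <> gc -> touches g v -> g \in [:: ga; gb; gc].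
Proof.
move=> Hv Ha Hb Hc Nab Nac Nbc Hg; apply/negPn/negP => Hg_new.
have Huniq : uniq [:: g; ga; gb; gc].
  move: Hg_new; rewrite /= !inE !negb_or !andbT => /and3P [-> -> ->] /=.
  by repeat (apply/andP; split); apply/eqP => E; congruence.
have Hsub : {subset [:: g; ga; gb; gc] <= [set e | touches e v]}.
  move=> e; rewrite !inE => /orP [/eqP->|/orP [/eqP->|/orP [/eqP->|/eqP->]]] //.
  - exact: (joins_touches Ha).1.
  - exact: (joins_touches Hb).1.
  - exact: (joins_touches Hc).1.
have := subset_leq_card (introT subsetP Hsub); rewrite (card_uniqP Huniq) /=.
have -> : [set e | touches e v] = [set e | (gends e).1 == v] :|: [set e | (gends e).2 == v].
  by apply/setP => e; rewrite !inE.
by rewrite cardsU; move: Hv; rewrite /deg; lia.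
Qed.

Lemma joins_other_end g v : touches g v -> joins g v (other_end g v).
Proof.
rewrite /touches /joins /other_end; case: (gends g) => a b /=.
by case: eqP => [-> _|_ /= /eqP ->]; rewrite eqxx ?orbT.
Qed.

Lemma joins_inside g x y X : joins g x y -> x \in X -> y \in X -> g \in inside X.
Proof. by rewrite /joins inE => /orP [] /eqP -> /= -> ->. Qed.

Lemma inside_joins g x y X : g \in inside X -> joins g x y -> (x \in X) && (y \in X).
Proof.
by rewrite /joins inE => /andP [Hx Hy] /orP [] /eqP E; move: Hx Hy; rewrite E /= => -> ->.
Qed.

Lemma cut_joins g x y X : joins g x y -> (g \in cut X) = ((x \in X) != (y \in X)).
Proof.
rewrite /joins inE => /orP [] /eqP -> //=.
by case: (x \in X); case: (y \in X).
Qed.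

Lemma cut_setC X : cut (~: X) = cut X.
Proof.
apply/setP => g; rewrite !inE.
by case: ((gends g).1 \in X); case: ((gends g).2 \in X).
Qed.

Lemma leafless_of_cycle X :
  has_cycle_in X -> exists2 D : {set gE G}, D \subset inside X & leafless D.
Proof.
move=> [k [x [e [x_inj [e_inj Hcyc]]]]].
exists [set e i | i in 'I_k.+1].
  apply/subsetP => g /imsetP [i _ ->].
  have [Hxi Hei] := Hcyc i; have [Hxi' _] := Hcyc (ordS i).
  exact: joins_inside Hei Hxi Hxi'.
split; first by exists (e ord0); apply: imset_f.
move=> v [g /imsetP [i _ ->] Hv].
have [j ->] : exists j, v = x j.
  by have [_ Hei] := Hcyc i; case: (touches_joins Hei Hv) => ->; eexists.
have Hin := (Hcyc (ord_pred j)).2; rewrite ord_predK in Hin.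
have Hout := (Hcyc j).2.
have [Ej|Nj] := eqVneq (ord_pred j) j.
  by left; exists (e (ord_pred j)); [apply: imset_f | rewrite -{2}Ej].
right; exists (e j), (e (ord_pred j)); split; try exact: imset_f.
- by apply/eqP => /e_inj Ej; move: Nj; rewrite -Ej eqxx.
- exact: (joins_touches Hout).1.
- exact: (joins_touches Hin).2.
Qed.

(* A walk from z: the list of its steps (edge used, vertex reached). *)
Fixpoint walk_in D z (p : seq (gE G * gV G)) : bool :=
  if p is (g, y) :: p' then [&& g \in D, joins g z y & walk_in D y p'] else true.

Lemma walk_in_take D z p i : walk_in D z p -> walk_in D z (take i p).
Proof. by elim: p z i => [|[g y] p IH] z [|i] //= /and3P [-> -> /IH ->]. Qed.

Lemma walk_in_nth D z p j g0 d : walk_in D z p -> j < size p ->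
  joins (nth g0 (map fst p) j) (nth d (z :: map snd p) j) (nth d (map snd p) j)
  && (nth g0 (map fst p) j \in D).
Proof.
elim: p z j => [|[g y] p IH] z [|j] //= /and3P [HgD Hg Hp] Hj; first by rewrite HgD Hg.
exact: IH.
Qed.

Lemma walk_in_untouched D y p z h : walk_in D y p -> z \notin y :: map snd p ->
  h \in map fst p -> ~~ touches h z.
Proof.
elim: p y => [|[g w] p IH] y //= /and3P [_ Hg Hp] Hz; rewrite inE => /orP [/eqP -> | Hh].
  by apply/negP => /(touches_joins Hg) [] E; move: Hz; rewrite !inE E eqxx ?orbT.
by apply: IH Hp _ Hh; move: Hz; rewrite !inE negb_or => /andP [].
Qed.

Lemma last_take (T : Type) (z : T) (s : seq T) (i : nat) : i <= size s ->
  last z (take i s) = nth z (z :: s) i.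
Proof.
elim: s z i => [|a s IH] z [|i] //= Hi.
by rewrite IH // (set_nth_default z).
Qed.

Lemma cycle_of_closed_walk D X z q g : D \subset inside X -> walk_in D z q ->
  uniq (z :: map snd q) -> uniq (rcons (map fst q) g) -> g \in D ->
  joins g (last z (map snd q)) z -> has_cycle_in X.
Proof.
move=> HDX Hq Hq_uniq Hqg_uniq HgD Hg.
pose k := size q.
have Hs1 : size (z :: map snd q) = k.+1 by rewrite /= size_map.
have Hs2 : size (rcons (map fst q) g) = k.+1 by rewrite size_rcons size_map.
exists k, (fun j : 'I_k.+1 => nth z (z :: map snd q) j),
  (fun j : 'I_k.+1 => nth g (rcons (map fst q) g) j).
split; first by move=> i j /eqP; rewrite nth_uniq ?Hs1 // => /eqP /val_inj.
split; first by move=> i j /eqP; rewrite nth_uniq ?Hs2 // => /eqP /val_inj.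
suff Hstep : forall i : 'I_k.+1,
  joins (nth g (rcons (map fst q) g) i) (nth z (z :: map snd q) i)
        (nth z (z :: map snd q) (ordS i))
  && (nth g (rcons (map fst q) g) i \in D).
  move=> i; have /andP [Hi HiD] := Hstep i; split=> //.
  by case/andP: (inside_joins (subsetP HDX _ HiD) Hi).
move=> i; rewrite nth_rcons size_map.
case: (ltnP i k) => Hik.
  have -> : nat_of_ord (ordS i) = i.+1 by rewrite /= modn_small.
  exact: walk_in_nth.
have Ei : nat_of_ord i = k by apply/eqP; rewrite eqn_leq Hik -ltnS ltn_ord.
have -> : nat_of_ord (ordS i) = 0 by rewrite /= Ei modnn.
by rewrite Ei if_same HgD andbT /= /k -(size_map snd) -last_nth.
Qed.

Section LeaflessWalk.
Variables (D : {set gE G}) (X : {set gV G}).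
Hypotheses (HDX : D \subset inside X) (HD : leafless D).

(* Leaflessness at the current end z gives an unused edge there, whose other end is
   either new or closes a cycle. *)
Lemma walk_extend_or_cycle z p : walk_in D z p ->
  uniq (z :: map snd p) -> uniq (map fst p) ->
  (p = [::] -> exists2 g, g \in D & touches g z) ->
  has_cycle_in X \/ exists g w, [/\ g \in D, joins g w z,
     w \notin z :: map snd p & g \notin map fst p].
Proof.
move=> Hp Hp_vuniq Hp_euniq Hstart; have [_ Hleaf] := HD.
have Hz : exists2 h, h \in D & touches h z.
  case: p Hp Hstart {Hp_vuniq Hp_euniq} => [|[h y] p'] Hp Hstart; first exact: Hstart.
  by move: Hp => /= /and3P [HhD Hh _]; exists h => //; exact: (joins_touches Hh).1.
case: (Hleaf z Hz) => [[g HgD Hg]|[g1 [g2 [Hg1 Hg2 Ng12 Hg1z Hg2z]]]].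
  by left; apply: (cycle_of_closed_walk (z := z) (q := [::]) (g := g) HDX).
have [g [HgD Hgz Hg_new]] : exists g, [/\ g \in D, touches g z &
    forall h y p', p = (h, y) :: p' -> g != h].
  case: p {Hp Hp_vuniq Hp_euniq Hstart} => [|[h y] p']; first by exists g1.
  have [E|N] := eqVneq g1 h; last by exists g1; split => // h' y' p'' [<- _ _].
  by exists g2; split => // h' y' p'' [<- _ _]; rewrite -E eq_sym.
have Hg_notin : g \notin map fst p.
  case: p Hp Hp_vuniq Hg_new {Hp_euniq Hstart} => [|[h y] p'] //= /and3P [_ _ Hp'].
  move=> /andP [Hz_notin _] Hg_new; rewrite inE negb_or (Hg_new h y p' erefl) /=.
  by apply/negP => /(walk_in_untouched Hp' Hz_notin); rewrite Hgz.
have Hgw := joins_other_end Hgz; set w := other_end g z in Hgw.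
have [Hw|Hw] := boolP (w \in z :: map snd p); last first.
  by right; exists g, w; rewrite joins_sym.
left; set i := index w (z :: map snd p).
have Hi : i <= size p by rewrite -ltnS -(size_map snd) -/(size (z :: map snd p)) index_mem.
apply: (cycle_of_closed_walk (z := z) (q := take i p) (g := g) HDX) => //.
- exact: walk_in_take.
- by rewrite map_take -/(take i.+1 (z :: map snd p)) take_uniq.
- rewrite rcons_uniq map_take take_uniq // andbT.
  by apply: contra Hg_notin => /mem_take.
- by rewrite map_take last_take ?size_map // nth_index // joins_sym.
Qed.

Lemma walk_cycle n z p : #|gV G| - size p <= n -> walk_in D z p ->
  uniq (z :: map snd p) -> uniq (map fst p) ->
  (p = [::] -> exists2 g, g \in D & touches g z) -> has_cycle_in X.
Proof.
elim: n z p => [|n IH] z p Hn Hp Hp_vuniq Hp_euniq Hstart;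
  case: (walk_extend_or_cycle Hp Hp_vuniq Hp_euniq Hstart) => [//|[g [w [HgD Hg Hw Hg_new]]]].
  have Hwp_uniq : uniq (w :: z :: map snd p) by rewrite /= Hw.
  have := max_card (mem (w :: z :: map snd p)).
  rewrite (card_uniqP Hwp_uniq) /= size_map => Hcard.
  move: Hn; rewrite leqn0 subn_eq0 => /(leq_trans Hcard).
  by rewrite ltnNge leqnSn.
apply: (IH w ((g, z) :: p)) => //=.
- by move: Hn; rewrite subnS; case: (_ - _).
- by rewrite HgD Hg Hp.
- by rewrite Hw.
- by rewrite Hg_new.
Qed.

End LeaflessWalk.

Lemma cycle_of_leafless D X : D \subset inside X -> leafless D -> has_cycle_in X.
Proof.
move=> HDX HD; have [[g HgD] _] := HD.
apply: (walk_cycle HDX HD (n := #|gV G|) (z := (gends g).1) (p := [::])) => //.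
- by rewrite subn0.
- by move=> _; exists g; rewrite /touches ?eqxx.
Qed.

Lemma leaf_of_not_leafless D : (exists g, g \in D) -> ~ leafless D ->
  exists v h, [/\ h \in D, touches h v, ~ joins h v v &
     forall g, g \in D -> touches g v -> g = h].
Proof.
move=> HD HnD.
have [v [[h HhD Hhv] Hnloop Hnpair]] : exists v, [/\ exists2 g, g \in D & touches g v,
    ~ (exists2 g, g \in D & joins g v v) &
    ~ (exists g1 g2, [/\ g1 \in D, g2 \in D, g1 != g2, touches g1 v & touches g2 v])].
  apply: NNPP => Hnv; apply: HnD; split => // v Hv; apply: NNPP => Hnot; apply: Hnv.
  by exists v; split => // [Hl|Hp]; apply: Hnot; [left|right].
exists v, h; split => // [Hh|g HgD Hgv]; first by apply: Hnloop; exists h.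
by apply/eqP; apply/negPn/negP => Ngh; apply: Hnpair; exists g, h.
Qed.

Lemma card_forest X D : 0 < #|X| -> D \subset inside X ->
  (forall D', D' \subset D -> ~ leafless D') -> #|D| < #|X|.
Proof.
move: {2}#|X| (leqnn #|X|) => n; elim: n X D => [|n IH] X D HXn HX HDX Hforest.
  lia.
have [->|[g0 Hg0]] := set_0Vmem D; first by rewrite cards0.
have [v [h [HhD Hhv Hnloop Hleaf]]] :=
  leaf_of_not_leafless (ex_intro _ g0 Hg0) (Hforest D (subxx D)).
have Hh := joins_other_end Hhv; set u := other_end h v in Hh.
have /andP [HvX HuX] := inside_joins (subsetP HDX _ HhD) Hh.
have Nuv : u != v by apply: contra_notN Hnloop => /eqP Euv; rewrite -{2}Euv.
have HX' : 0 < #|X :\ v| by apply/card_gt0P; exists u; rewrite !inE Nuv.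
have HD' : D :\ h \subset inside (X :\ v).
  apply/subsetP => g; rewrite !inE => /andP [Ngh HgD].
  have Ngv : ~~ touches g v by apply: contra Ngh => /(Hleaf _ HgD) ->.
  move: (subsetP HDX _ HgD) Ngv; rewrite inE /touches negb_or.
  by case/andP=> -> -> /andP [-> ->].
have := IH (X :\ v) (D :\ h); rewrite (cardsD1 v X) (cardsD1 h D) HvX HhD in HXn *.
apply=> // D' HD'h; apply: Hforest; apply: subset_trans HD'h (subD1set _ _).
Qed.

Lemma card_set_sum (T : finType) (A : {set T}) : #|A| = \sum_(x : T) (x \in A).
Proof. by rewrite -sum1_card big_mkcond /=; apply: eq_bigr => x _; case: (x \in A). Qed.

Lemma sum_card_fibres (f : gE G -> gV G) X :
  \sum_(x in X) #|[set g | f g == x]| = #|[set g | f g \in X]|.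
Proof.
rewrite -[RHS]sum1_card (partition_big f (mem X)) /=; last by move=> g; rewrite inE.
apply: eq_bigr => x Hx; rewrite -sum1_card; apply: eq_bigl => g.
by rewrite !inE; case: eqP => [->|]; rewrite ?Hx ?andbF.
Qed.

Lemma sum_deg X : \sum_(x in X) deg x = 2 * #|inside X| + #|cut X|.
Proof.
rewrite /deg big_split /= !sum_card_fibres !card_set_sum mul2n -addnn -!big_split /=.
apply: eq_bigr => g _; rewrite !inE.
by case: ((gends g).1 \in X); case: ((gends g).2 \in X).
Qed.

Lemma cubic_acyclic_cut X : cubic G -> 0 < #|X| ->
  (forall D, D \subset inside X -> ~ leafless D) -> #|X| + 2 <= #|cut X|.
Proof.
move=> Hcub HX Hacyc.
have Hsum := sum_deg X; rewrite (eq_bigr (fun _ => 3)) // sum_nat_const in Hsum.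
have := card_forest HX (subxx (inside X)) Hacyc.
lia.
Qed.

End Multigraph.

(* a1, a4, a1', a4' say on which side of the cut of G' the ends of the two new edges lie,
   and (b2, b3) on which sides v2 and v3 are put back; the premises of the first hypothesis
   guarantee that both sides of the lifted cut still contain a cycle. *)
Lemma split_cut_sides (a1 a4 a1' a4' : bool) (m l : nat) :
  (forall b2 b3 : bool, (a1 && a4) || (a1' && a4') ==> b2 && b3 ->
     (~~ a1 && ~~ a4) || (~~ a1' && ~~ a4') ==> ~~ b2 && ~~ b3 ->
     l <= m + (a1 != b2) + (b2 != b3) + (b3 != a4) + (b2 != a1') + (b3 != a4')) ->
  m + (a1 != a4) + (a1' != a4') < l ->
  [&& a1 == a4, a1' == a4' & a1 != a1'].
Proof.
case: a1; case: a4; case: a1'; case: a4' => //= Hlift;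
  first [have := Hlift true true erefl erefl | have := Hlift false false erefl erefl];
  rewrite /=; lia.
Qed.

Section SplitOff.
Variables (G : mgraph) (v1 v2 v3 v4 v1' v4' : gV G).
Hypothesis Hcub : cubic G.
Hypotheses (Huniq : uniq [:: v1; v2; v3; v4]) (Nv1' : v1' != v1) (Nv4' : v4' != v4).
Variables (h1 : (v1 != v2) && (v1 != v3)) (h4 : (v4 != v2) && (v4 != v3))
  (h1' : (v1' != v2) && (v1' != v3)) (h4' : (v4' != v2) && (v4' != v3)).
Variables (e12 e23 e34 e21' e34' : gE G).
Hypotheses (J12 : joins e12 v1 v2) (J23 : joins e23 v2 v3) (J34 : joins e34 v3 v4)
  (J21' : joins e21' v2 v1') (J34' : joins e34' v3 v4').

Notation G' := (split_off h1 h4 h1' h4').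
Notation e14 := (new_edge_v1v4 h1 h4 h1' h4').
Notation e14' := (new_edge_v1'v4' h1 h4 h1' h4').
Notation keptE := (keepE v2 v3).
Notation keptV := (keepV v2 v3).
Notation old_edge := {e : gE G | keptE e}.
Implicit Types (S : {set gV G'}) (F : {set gE G'}).

Definition u1 : gV G' := exist _ v1 h1.
Definition u4 : gV G' := exist _ v4 h4.
Definition u1' : gV G' := exist _ v1' h1'.
Definition u4' : gV G' := exist _ v4' h4'.

Lemma vertices_neq : [/\ [/\ v1 <> v2, v1 <> v3, v1 <> v4, v2 <> v3 & v2 <> v4],
  [/\ v3 <> v4, v1' <> v1, v1' <> v2, v1' <> v3 & v4' <> v4] & v4' <> v2 /\ v4' <> v3].
Proof.
move: Huniq h1' h4' Nv1' Nv4'; rewrite /= !inE !negb_or.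
move=> /and4P [/and3P [/eqP ? /eqP ? /eqP ?] /andP [/eqP ? /eqP ?] /eqP ? _].
by move=> /andP [/eqP ? /eqP ?] /andP [/eqP ? /eqP ?] /eqP ? /eqP ?.
Qed.

Ltac neq_vertices :=
  case: vertices_neq => -[? ? ? ? ?] [? ? ? ? ?] [? ?]; congruence.

Ltac neq_edge g g' :=
  match goal with A : is_true (joins g _ _) |- _ =>
  match goal with B : is_true (joins g' _ _) |- _ =>
    apply: (edge_neq A B) => -[? ?]; neq_vertices end end.

Lemma edges_neq : [/\ [/\ e12 <> e23, e12 <> e34, e12 <> e21', e12 <> e34' & e23 <> e34],
  [/\ e23 <> e21', e23 <> e34', e34 <> e21', e34 <> e34' & e21' <> e34'] & True].
Proof.
split; [split|split|by []];
  match goal with |- ?g <> ?g' => neq_edge g g' end.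
Qed.

Ltac neq_edges := case: edges_neq => -[? ? ? ? ?] [? ? ? ? ?] _; congruence.

Definition removed_edges := [:: e12; e23; e34; e21'; e34'].

Lemma removed_edges_uniq : uniq removed_edges.
Proof.
rewrite /= !inE !negb_or !andbT; repeat (apply/andP; split); apply/eqP => E; neq_edges.
Qed.

Lemma touches_not_kept g v : touches g v -> v = v2 \/ v = v3 -> ~~ keptE g.
Proof.
rewrite /keepE /keepV => /orP [] /eqP -> [] ->; by rewrite eqxx ?andbF.
Qed.

Lemma removed_not_kept g : g \in removed_edges -> ~~ keptE g.
Proof.
rewrite !inE => /orP [/eqP->|/orP [/eqP->|/orP [/eqP->|/orP [/eqP->|/eqP->]]]].
- by apply: (touches_not_kept (joins_touches J12).2); left.
- by apply: (touches_not_kept (joins_touches J23).1); left.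
- by apply: (touches_not_kept (joins_touches J34).1); right.
- by apply: (touches_not_kept (joins_touches J21').1); left.
- by apply: (touches_not_kept (joins_touches J34').1); right.
Qed.

Lemma not_kept_removed g : ~~ keptE g -> g \in removed_edges.
Proof.
rewrite /keepE /keepV !negb_and !negbK => Hg.
have [Hg2|Hg3] : touches g v2 \/ touches g v3.
  by rewrite /touches; case/orP: Hg => /orP [] ->; rewrite ?orbT; auto.
- have J21 : joins e12 v2 v1 by rewrite joins_sym.
  have := touches_deg3 (Hcub v2) J21 J23 J21' _ _ _ Hg2.
  by rewrite !inE => /(_ ltac:(neq_edges) ltac:(neq_edges) ltac:(neq_edges)) /or3P [] ->;
    rewrite ?orbT.
- have J32 : joins e23 v3 v2 by rewrite joins_sym.
  have := touches_deg3 (Hcub v3) J32 J34 J34' _ _ _ Hg3.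
  by rewrite !inE => /(_ ltac:(neq_edges) ltac:(neq_edges) ltac:(neq_edges)) /or3P [] ->;
    rewrite ?orbT.
Qed.

Definition lift_set (S : {set gV G'}) (b2 b3 : bool) : {set gV G} :=
  [set v | ((v == v2) && b2) || ((v == v3) && b3) || (v \in [set val u | u in S])].

Lemma not_kept_val (S : {set gV G'}) v : ~~ keptV v -> v \notin [set val u | u in S].
Proof. by move=> Hv; apply/imsetP => -[u _ E]; move: Hv; rewrite E (valP u). Qed.

Lemma lift_set_val S b2 b3 (u : gV G') : (val u \in lift_set S b2 b3) = (u \in S).
Proof.
have /andP [N2 N3] := valP u.
by rewrite inE (negbTE N2) (negbTE N3) /= mem_imset //; apply: val_inj.
Qed.

Lemma lift_set_v2 S b2 b3 : (v2 \in lift_set S b2 b3) = b2.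
Proof.
have N23 : v2 != v3 by apply/eqP; neq_vertices.
by rewrite inE eqxx (negbTE N23) /= (negbTE (not_kept_val S _)) ?orbF // /keepV eqxx.
Qed.

Lemma lift_set_v3 S b2 b3 : (v3 \in lift_set S b2 b3) = b3.
Proof.
have N32 : v3 != v2 by apply/eqP; neq_vertices.
by rewrite inE eqxx (negbTE N32) /= (negbTE (not_kept_val S _)) ?orbF // /keepV eqxx andbF.
Qed.

Lemma kept_or_path v : keptV v \/ v = v2 \/ v = v3.
Proof.
rewrite /keepV; have [->|N2] := eqVneq v v2; first by auto.
by have [->|N3] := eqVneq v v3; auto.
Qed.

Lemma setC_lift_set S b2 b3 : ~: lift_set S b2 b3 = lift_set (~: S) (~~ b2) (~~ b3).
Proof.
apply/setP => v; case: (kept_or_path v) => [Hv|[->|->]].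
- have -> : v = val (exist _ v Hv : gV G') by [].
  by rewrite in_setC !lift_set_val in_setC.
- by rewrite in_setC !lift_set_v2.
- by rewrite in_setC !lift_set_v3.
Qed.

Lemma lift_set_kept S v : v \in lift_set S false false -> keptV v.
Proof. by rewrite inE !andbF => /imsetP [u _ ->]; exact: valP. Qed.

Lemma card_lift_set S : #|lift_set S false false| = #|S|.
Proof.
have -> : lift_set S false false = [set val u | u in S].
  by apply/setP => v; rewrite inE !andbF.
by rewrite card_imset //; apply: val_inj.
Qed.

Lemma card_split_off : #|gV G'| + 2 = #|gV G|.
Proof.
have N23 : v2 != v3 by apply/eqP; neq_vertices.
rewrite -(cardsC [set v2; v3]) cards2 N23 addnC; congr (_ + _).
by rewrite /= card_sig; apply: eq_card => v; rewrite !inE /keepV negb_or.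
Qed.

Lemma touches_old (e : old_edge) (u : gV G') :
  touches (inl e : gE G') u = touches (val e) (val u).
Proof. by rewrite /touches /= -!val_eqE. Qed.

Lemma touches_v1v4 (u : gV G') :
  touches e14 u = (v1 == val u) || (v4 == val u).
Proof. by rewrite /touches /= -!val_eqE. Qed.

Lemma touches_v1'v4' (u : gV G') :
  touches e14' u = (v1' == val u) || (v4' == val u).
Proof. by rewrite /touches /= -!val_eqE. Qed.

Lemma joins_old (e : old_edge) (u w : gV G') :
  joins (inl e : gE G') u w = joins (val e) (val u) (val w).
Proof. by rewrite !joinsE /= -!val_eqE. Qed.

Lemma joins_v1v4 (u w : gV G') : joins e14 u w =
  (v1 == val u) && (v4 == val w) || (v1 == val w) && (v4 == val u).
Proof. by rewrite !joinsE /= -!val_eqE. Qed.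

Lemma joins_v1'v4' (u w : gV G') : joins e14' u w =
  (v1' == val u) && (v4' == val w) || (v1' == val w) && (v4' == val u).
Proof. by rewrite !joinsE /= -!val_eqE. Qed.

Lemma inside_old S (e : old_edge) b2 b3 :
  ((inl e : gE G') \in inside S) = (val e \in inside (lift_set S b2 b3)).
Proof.
have E1 := lift_set_val S b2 b3 (exist _ (gends (val e)).1 (keepE1 e) : gV G').
have E2 := lift_set_val S b2 b3 (exist _ (gends (val e)).2 (keepE2 e) : gV G').
by rewrite [in RHS]inE /= E1 E2 [in LHS]inE.
Qed.

Lemma cut_old S (e : old_edge) b2 b3 :
  ((inl e : gE G') \in cut S) = (val e \in cut (lift_set S b2 b3)).
Proof.
have E1 := lift_set_val S b2 b3 (exist _ (gends (val e)).1 (keepE1 e) : gV G').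
have E2 := lift_set_val S b2 b3 (exist _ (gends (val e)).2 (keepE2 e) : gV G').
by rewrite [in RHS]inE /= E1 E2 [in LHS]inE.
Qed.

Lemma inside_v1v4 S : (e14 \in inside S) = (u1 \in S) && (u4 \in S).
Proof. by rewrite in_set. Qed.

Lemma inside_v1'v4' S : (e14' \in inside S) = (u1' \in S) && (u4' \in S).
Proof. by rewrite in_set. Qed.

Lemma cut_v1v4 S : (e14 \in cut S) = ((u1 \in S) != (u4 \in S)).
Proof. by rewrite in_set. Qed.

Lemma cut_v1'v4' S : (e14' \in cut S) = ((u1' \in S) != (u4' \in S)).
Proof. by rewrite in_set. Qed.

Definition old_cut (S : {set gV G'}) : nat := #|[set e : old_edge | (inl e : gE G') \in cut S]|.

Lemma old_cut_setC S : old_cut (~: S) = old_cut S.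
Proof. by rewrite /old_cut cut_setC. Qed.

Lemma card_cut_lift_set S b2 b3 : #|cut (lift_set S b2 b3)| = old_cut S +
  ((u1 \in S) != b2) + (b2 != b3) + (b3 != (u4 \in S)) +
  (b2 != (u1' \in S)) + (b3 != (u4' \in S)).
Proof.
set X := lift_set S b2 b3.
rewrite -(cardsID [set g | keptE g] (cut X)) -!addnA; congr (_ + _).
  have -> : cut X :&: [set g | keptE g] = val @: [set e : old_edge | (inl e : gE G') \in cut S].
    apply/setP => g; rewrite in_setI [g \in [set g | _]]inE; have [Hg|Hg] := boolP (keptE g).
      have -> : g = val (exist _ g Hg : old_edge) by [].
      rewrite andbT (mem_imset _ _ val_inj) [in RHS]in_set; exact: esym (cut_old S _ b2 b3).
    by rewrite andbF; apply/esym/negbTE/imsetP => -[e _ E]; move: Hg; rewrite E (valP e).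
  by rewrite card_imset //; apply: val_inj.
have -> : cut X :\: [set g | keptE g] = [set g in [seq g <- removed_edges | g \in cut X]].
  apply/setP => g; rewrite in_setD [g \in [set g | keptE g]]inE [in RHS]inE mem_filter.
  have [Hg|Hg] := boolP (keptE g) => /=.
    by apply/esym/negbTE/negP => /andP [_ /removed_not_kept]; rewrite Hg.
  by rewrite (not_kept_removed Hg) andbT.
rewrite cardsE (card_uniqP (filter_uniq _ removed_edges_uniq)) size_filter /=.
rewrite (cut_joins _ J12) (cut_joins _ J23) (cut_joins _ J34) (cut_joins _ J21') (cut_joins _ J34').
rewrite -[v1]/(val u1) -[v4]/(val u4) -[v1']/(val u1') -[v4']/(val u4').
by rewrite !lift_set_val /X lift_set_v2 lift_set_v3 addn0.
Qed.

Lemma card_cut_split_off (S : {set gV G'}) : #|cut S| = old_cut S +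
  ((u1 \in S) != (u4 \in S)) + ((u1' \in S) != (u4' \in S)).
Proof.
have inr_new b : (inr b : gE G') \notin inl @: [set: old_edge] by apply/imsetP => -[].
rewrite -(cardsID (inl @: [set: old_edge]) (cut S)) -addnA; congr (_ + _).
  have -> : cut S :&: inl @: [set: old_edge] = inl @: [set e : old_edge | (inl e : gE G') \in cut S].
    apply/setP => -[e|b]; last by rewrite in_setI (negbTE (inr_new b)) andbF; apply/esym/imsetP => -[].
    by rewrite in_setI !(mem_imset _ _ inl_inj) in_setT andbT [in RHS]in_set.
  by rewrite card_imset //; apply: inl_inj.
have -> : cut S :\: inl @: [set: old_edge] = [set x in [seq x <- [:: e14; e14'] | x \in cut S]].
  apply/setP => -[e|b]; rewrite in_setD [in RHS]in_set mem_filter.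
    by rewrite (mem_imset _ _ inl_inj) in_setT /= !inE andbF.
  by rewrite (inr_new b) /=; case: b; rewrite !in_cons eqxx ?orbT andbT.
rewrite cardsE (card_uniqP _) ?filter_uniq // size_filter /= !inE.
by case: (_ != _); case: (_ != _).
Qed.

Definition lift_edges (F : {set gE G'}) : {set gE G} :=
  val @: [set e : old_edge | (inl e : gE G') \in F] :|:
  ((if e14 \in F then [set e12; e23; e34] else set0) :|:
   (if e14' \in F then [set e21'; e23; e34'] else set0)).

Lemma lift_edges_old F (e : old_edge) : (val e \in lift_edges F) = ((inl e : gE G') \in F).
Proof.
have Ne : val e \notin removed_edges by apply: contraL (valP e) => /removed_not_kept.
have [N1 N2] : val e \notin [set e12; e23; e34] /\ val e \notin [set e21'; e23; e34'].
  by move: Ne; rewrite !inE !negb_or => /and5P [-> -> -> -> ->].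
rewrite !in_setU (mem_imset _ _ val_inj) [in LHS]in_set.
by case: (e14 \in F); case: (e14' \in F); rewrite ?(negbTE N1) ?(negbTE N2) ?in_set0 ?orbF.
Qed.

Lemma lift_edges_v1v4 F : e14 \in F -> [set e12; e23; e34] \subset lift_edges F.
Proof. by move=> Ht; apply/subsetP => g Hg; rewrite !in_setU Ht Hg /= orbT. Qed.

Lemma lift_edges_v1'v4' F : e14' \in F -> [set e21'; e23; e34'] \subset lift_edges F.
Proof. by move=> Hf; apply/subsetP => g Hg; rewrite !in_setU Hf Hg /= !orbT. Qed.

Lemma lift_edges_cases F g : g \in lift_edges F ->
  [\/ exists2 e : old_edge, g = val e & (inl e : gE G') \in F,
      e14 \in F /\ g \in [set e12; e23; e34]
    | e14' \in F /\ g \in [set e21'; e23; e34']].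
Proof.
case/setUP => [/imsetP [e He ->]|/setUP []].
- by apply: Or31; exists e; rewrite // inE in He.
- by case: ifP => [Ht Hg|_]; [apply: Or32 | rewrite in_set0].
- by case: ifP => [Hf Hg|_]; [apply: Or33 | rewrite in_set0].
Qed.

Lemma lift_edges_inside S b2 b3 F : F \subset inside S ->
  ((e14 \in F) || (e14' \in F) -> b2 && b3) ->
  lift_edges F \subset inside (lift_set S b2 b3).
Proof.
move=> HDS Hb; apply/subsetP => g /lift_edges_cases [[e -> He]|[Ht Hg]|[Hf Hg]].
- by rewrite -inside_old; apply: (subsetP HDS).
- have /andP [B2 B3] : b2 && b3 by apply: Hb; rewrite Ht.
  have := subsetP HDS _ Ht.
  rewrite inside_v1v4 -(lift_set_val S b2 b3 u1) -(lift_set_val S b2 b3 u4) => /andP [S1 S4].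
  have S2 : v2 \in lift_set S b2 b3 by rewrite lift_set_v2.
  have S3 : v3 \in lift_set S b2 b3 by rewrite lift_set_v3.
  by case/set3P: Hg => ->; apply: joins_inside; eauto.
- have /andP [B2 B3] : b2 && b3 by apply: Hb; rewrite Hf orbT.
  have := subsetP HDS _ Hf.
  rewrite inside_v1'v4' -(lift_set_val S b2 b3 u1') -(lift_set_val S b2 b3 u4') => /andP [S1 S4].
  have S2 : v2 \in lift_set S b2 b3 by rewrite lift_set_v2.
  have S3 : v3 \in lift_set S b2 b3 by rewrite lift_set_v3.
  by case/set3P: Hg => ->; apply: joins_inside; eauto.
Qed.

Lemma lift_edges_path_vertex F g v : v = v2 \/ v = v3 ->
  g \in lift_edges F -> touches g v ->
  exists g1 g2, [/\ g1 \in lift_edges F, g2 \in lift_edges F, g1 != g2,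
                    touches g1 v & touches g2 v].
Proof.
move=> Hv /lift_edges_cases [[e -> _]|[Ht _]|[Hf _]] Hgv.
- by move: (touches_not_kept Hgv Hv); rewrite (valP e).
- have Hsub := subsetP (lift_edges_v1v4 Ht).
  case: Hv => ->; [exists e12, e23 | exists e23, e34]; split;
    try (apply: Hsub; rewrite !inE eqxx ?orbT //); try (apply/eqP; neq_edges).
  + exact: (joins_touches J12).2.
  + exact: (joins_touches J23).1.
  + exact: (joins_touches J23).2.
  + exact: (joins_touches J34).1.
- have Hsub := subsetP (lift_edges_v1'v4' Hf).
  case: Hv => ->; [exists e21', e23 | exists e23, e34']; split;
    try (apply: Hsub; rewrite !inE eqxx ?orbT //); try (apply/eqP; neq_edges).
  + exact: (joins_touches J21').1.
  + exact: (joins_touches J23).1.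
  + exact: (joins_touches J23).2.
  + exact: (joins_touches J34').1.
Qed.

Lemma touches_lift_edges F g (u : gV G') : g \in lift_edges F -> touches g (val u) ->
  exists2 x, x \in F & touches x u.
Proof.
have /andP [/eqP N2 /eqP N3] := valP u.
move=> /lift_edges_cases [[e -> He]|[Ht Hg]|[Hf Hg]] Hgu.
- by exists (inl e); rewrite // touches_old.
- exists e14; rewrite // touches_v1v4.
  case/set3P: Hg Hgu => ->.
  + by case/(touches_joins J12) => E; [rewrite E eqxx | case: (N2 E)].
  + by case/(touches_joins J23) => E; [case: (N2 E) | case: (N3 E)].
  + by case/(touches_joins J34) => E; [case: (N3 E) | rewrite E eqxx orbT].
- exists e14'; rewrite // touches_v1'v4'.
  case/set3P: Hg Hgu => ->.
  + by case/(touches_joins J21') => E; [case: (N2 E) | rewrite E eqxx].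
  + by case/(touches_joins J23) => E; [case: (N2 E) | case: (N3 E)].
  + by case/(touches_joins J34') => E; [case: (N3 E) | rewrite E eqxx orbT].
Qed.

(* The edge of [lift_edges] that an edge x of G' contributes at its end v. *)
Definition edge_at (v : gV G) (x : gE G') : gE G :=
  match x with
  | inl e => val e
  | inr true => if v == v1 then e12 else e34
  | inr false => if v == v1' then e21' else e34'
  end.

Lemma edge_at_lift F (u : gV G') x : x \in F -> touches x u ->
  edge_at (val u) x \in lift_edges F /\ touches (edge_at (val u) x) (val u).
Proof.
case: x => [e|[]] Hx Hxu /=.
- by rewrite lift_edges_old -touches_old.
- have Hsub := subsetP (lift_edges_v1v4 Hx); rewrite touches_v1v4 in Hxu.
  case: ifP => [/eqP ->|/negbT N1]; split; try (apply: Hsub; rewrite !inE eqxx ?orbT //).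
  + exact: (joins_touches J12).1.
  + by move: Hxu; rewrite eq_sym (negbTE N1) => /eqP <-; case: (joins_touches J34).
- have Hsub := subsetP (lift_edges_v1'v4' Hx); rewrite touches_v1'v4' in Hxu.
  case: ifP => [/eqP ->|/negbT N1]; split; try (apply: Hsub; rewrite !inE eqxx ?orbT //).
  + exact: (joins_touches J21').2.
  + by move: Hxu; rewrite eq_sym (negbTE N1) => /eqP <-; case: (joins_touches J34').
Qed.

Lemma edge_at_inj v x y : x != y -> edge_at v x != edge_at v y.
Proof.
have new_removed b : ~~ keptE (edge_at v (inr b)).
  by apply: removed_not_kept; case: b => /=; case: ifP; rewrite !inE eqxx ?orbT.
case: x y => [a|b] [c|d] Nxy.
- by apply: contra Nxy => /eqP /val_inj ->.
- by apply: contra (new_removed d) => /eqP <-; exact: valP.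
- by apply: contra (new_removed b) => /eqP ->; exact: valP.
- by case: b d Nxy => [] [] //= _; do 2 case: ifP => _; apply/eqP; neq_edges.
Qed.

Lemma lift_edges_leafless F : leafless F -> leafless (lift_edges F).
Proof.
move=> [[x0 Hx0] HF]; split.
  case: x0 Hx0 => [e|[]] Hx0.
  - by exists (val e); rewrite lift_edges_old.
  - by exists e12; apply: (subsetP (lift_edges_v1v4 Hx0)); rewrite !inE eqxx.
  - by exists e21'; apply: (subsetP (lift_edges_v1'v4' Hx0)); rewrite !inE eqxx.
move=> v [g Hg Hgv]; case: (kept_or_path v) => [Hv|Hv]; last first.
  by right; exact: lift_edges_path_vertex Hv Hg Hgv.
pose u : gV G' := exist _ v Hv.
case: (HF u (touches_lift_edges (u := u) Hg Hgv)) => [[x Hx Hxu]|[x [y [Hx Hy Nxy Hxu Hyu]]]].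
  case: x Hx Hxu => [e|[]] Hx.
  - by rewrite joins_old => Hev; left; exists (val e); rewrite ?lift_edges_old.
  - by rewrite joins_v1v4 orbb => /andP [/eqP E1 /eqP E4]; neq_vertices.
  - rewrite joins_v1'v4' orbb => /andP [/eqP E1 /eqP E4].
    have Hsub := subsetP (lift_edges_v1'v4' Hx).
    right; exists e21', e34'; split.
    + by apply: Hsub; rewrite !inE eqxx.
    + by apply: Hsub; rewrite !inE eqxx ?orbT.
    + by apply/eqP; neq_edges.
    + by rewrite -[v]/(val u) -E1; case: (joins_touches J21').
    + by rewrite -[v]/(val u) -E4; case: (joins_touches J34').
have [Hx' Hxv] := edge_at_lift Hx Hxu.
have [Hy' Hyv] := edge_at_lift Hy Hyu.
by right; exists (edge_at v x), (edge_at v y); split => //; exact: edge_at_inj.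
Qed.

Lemma lift_cycle S b2 b3 F : F \subset inside S -> leafless F ->
  ((e14 \in F) || (e14' \in F) -> b2 && b3) ->
  has_cycle_in (lift_set S b2 b3).
Proof.
move=> HFS HF Hb; apply: (cycle_of_leafless (D := lift_edges F)).
- exact: lift_edges_inside.
- exact: lift_edges_leafless.
Qed.

Definition has_old_cycle_in S : Prop := exists2 F : {set gE G'}, F \subset inside S &
  [/\ leafless F, e14 \notin F & e14' \notin F].

Lemma old_cycle_of_lift S (D : {set gE G}) :
  D \subset inside (lift_set S false false) -> leafless D -> has_old_cycle_in S.
Proof.
move=> HDS [[g0 Hg0] HD].
have Hkept g : g \in D -> keptE g.
  move=> HgD; have := subsetP HDS _ HgD; rewrite inE => /andP [H1 H2].
  by rewrite /keepE (lift_set_kept H1) (lift_set_kept H2).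
have HF (g : gE G) (Hg : keptE g) :
    ((inl (exist _ g Hg) : gE G') \in inl @: [set e : old_edge | val e \in D]) = (g \in D).
  by rewrite (mem_imset _ _ inl_inj) inE.
exists (inl @: [set e : old_edge | val e \in D]); first last.
  split; last by apply/imsetP => -[].
  - split; first by exists (inl (exist _ g0 (Hkept _ Hg0))); rewrite HF.
    move=> u [x /imsetP [e He ->] Heu].
    rewrite inE in He; rewrite touches_old in Heu.
    case: (HD (val u)) => [|[g HgD Hg]|[g1 [g2 [Hg1 Hg2 N12 Hg1u Hg2u]]]].
    + by exists (val e).
    + by left; exists (inl (exist _ g (Hkept _ HgD))); rewrite ?HF ?joins_old.
    + right; exists (inl (exist _ g1 (Hkept _ Hg1))), (inl (exist _ g2 (Hkept _ Hg2))).
      by split; rewrite ?HF ?touches_old //; apply: contra N12 => /eqP [->].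
  - by apply/imsetP => -[].
apply/subsetP => x /imsetP [e He ->]; rewrite (inside_old S e false false).
by apply: (subsetP HDS); rewrite inE in He.
Qed.

Lemma cut_lift_set_acyclic S : has_cycle_in S -> ~ has_old_cycle_in S ->
  #|S| + 2 <= #|cut (lift_set S false false)|.
Proof.
move=> [k [x [e [_ [_ Hx]]]]] Hacyc; rewrite -card_lift_set.
apply: cubic_acyclic_cut Hcub _ _.
  by apply/card_gt0P; exists (val (x ord0)); rewrite lift_set_val; case: (Hx ord0).
by move=> D HD HDl; apply: Hacyc; exact: old_cycle_of_lift HD HDl.
Qed.

Lemma card_cut_lift_set_split S b :
  (u1 \in S) = (u4 \in S) -> (u1' \in S) = (u4' \in S) -> (u1 \in S) != (u1' \in S) ->
  #|cut (lift_set S b b)| = old_cut S + 2.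
Proof.
move=> E1 E2; rewrite card_cut_lift_set E1 E2.
by case: (u4 \in S); case: (u4' \in S); case: b; rewrite -!addnA.
Qed.

Lemma lift_set_cyclic_cut S : has_cycle_in S -> has_old_cycle_in (~: S) ->
  cyclic_cut (lift_set S true true).
Proof.
move=> HS [F HF [HFl Nt Nf]]; have [D HD HDl] := leafless_of_cycle HS; split.
  exact: lift_cycle HD HDl _.
rewrite setC_lift_set; apply: lift_cycle HF HFl _.
by case/orP => H; [rewrite H in Nt | rewrite H in Nf].
Qed.

Variable l : nat.
Hypothesis Hconn : cyc_edge_conn G l.
Variable A : {set gV G'}.
Hypothesis HA : cyclic_cut A.

Lemma conn_lift_set b2 b3 :
  ((u1 \in A) && (u4 \in A)) || ((u1' \in A) && (u4' \in A)) ==> b2 && b3 ->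
  (~~ (u1 \in A) && ~~ (u4 \in A)) || (~~ (u1' \in A) && ~~ (u4' \in A)) ==> ~~ b2 && ~~ b3 ->
  l <= #|cut (lift_set A b2 b3)|.
Proof.
move=> /implyP H1 /implyP H2; case: HA => HA1 HA2.
have [D1 HD1 HD1l] := leafless_of_cycle HA1; have [D2 HD2 HD2l] := leafless_of_cycle HA2.
apply: Hconn; split; last rewrite setC_lift_set.
- apply: (lift_cycle HD1 HD1l) => /orP [] /(subsetP HD1) Hnew; apply: H1.
  + by rewrite -inside_v1v4 Hnew.
  + by rewrite -inside_v1'v4' Hnew orbT.
- apply: (lift_cycle HD2 HD2l) => /orP [] /(subsetP HD2) Hnew; apply: H2.
  + by rewrite -!in_setC -inside_v1v4 Hnew.
  + by rewrite -!in_setC -inside_v1'v4' Hnew orbT.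
Qed.

Lemma new_edges_sides : #|cut A| < l ->
  [&& (u1 \in A) == (u4 \in A), (u1' \in A) == (u4' \in A) & (u1 \in A) != (u1' \in A)].
Proof.
rewrite card_cut_split_off; apply: split_cut_sides => b2 b3 H1 H2.
by rewrite -card_cut_lift_set; exact: conn_lift_set.
Qed.

Lemma cut_split_off_lower : 2 * l + 2 <= #|gV G| -> #|cut A| < l -> l - 2 <= #|cut A|.
Proof.
move=> Hsize Hlt; have [HA1 HA2] := HA.
have /and3P [/eqP E14 /eqP E14' N] := new_edges_sides Hlt.
have Hcut : #|cut A| = old_cut A by rewrite card_cut_split_off E14 E14' !eqxx !addn0.
have E14C : (u1 \in ~: A) = (u4 \in ~: A) by rewrite !in_setC E14.
have E14C' : (u1' \in ~: A) = (u4' \in ~: A) by rewrite !in_setC E14'.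
have NC : (u1 \in ~: A) != (u1' \in ~: A) by rewrite !in_setC; case: (u1 \in A) N; case: (u1' \in A).
rewrite Hcut leq_subLR addnC.
have [HB|NB] := classic (has_old_cycle_in (~: A)).
  by rewrite -(card_cut_lift_set_split true E14 E14' N); apply/Hconn/lift_set_cyclic_cut.
have [HB'|NB'] := classic (has_old_cycle_in A).
  rewrite -(old_cut_setC A) -(card_cut_lift_set_split true E14C E14C' NC).
  by apply/Hconn/lift_set_cyclic_cut; rewrite ?setCK.
have := cut_lift_set_acyclic HA1 NB'.
rewrite (card_cut_lift_set_split false E14 E14' N) leq_add2r => CA.
have := cut_lift_set_acyclic HA2 NB.
rewrite (card_cut_lift_set_split false E14C E14C' NC) old_cut_setC leq_add2r => CB.
have : 2 * l <= 2 * old_cut A.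
  rewrite -(leq_add2r 2) (leq_trans Hsize) // -card_split_off -(cardsC A) leq_add2r mul2n -addnn.
  exact: leq_add.
by rewrite leq_pmul2l // leqNgt -Hcut Hlt.
Qed.

End SplitOff.

Theorem mainTheorem3 (l : nat) (G : mgraph) (v1 v2 v3 v4 v1' v4' : gV G)
  (Hl : 1 <= l) (Hcub : cubic G) (Hconn : cyc_edge_conn G l)
  (Hsize : 2 * l + 2 <= #|gV G|)
  (Huniq : uniq [:: v1; v2; v3; v4])
  (Ha12 : adj v1 v2) (Ha23 : adj v2 v3) (Ha34 : adj v3 v4)
  (Ha1' : adj v2 v1') (Hd1' : v1' != v1)
  (Ha4' : adj v3 v4') (Hd4' : v4' != v4)
  (h1 : (v1 != v2) && (v1 != v3)) (h4 : (v4 != v2) && (v4 != v3))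
  (h1' : (v1' != v2) && (v1' != v3)) (h4' : (v4' != v2) && (v4' != v3))
  (A' : {set gV (split_off h1 h4 h1' h4')}) :
  cyclic_cut A' -> #|cut A'| < l ->
  [/\ l - 2 <= #|cut A'|,
      new_edge_v1v4 h1 h4 h1' h4' \notin cut A'
    & new_edge_v1'v4' h1 h4 h1' h4' \notin cut A'].
Proof.
move=> HA Hlt.
case: Ha12 => e12 J12; case: Ha23 => e23 J23; case: Ha34 => e34 J34.
case: Ha1' => e21' J21'; case: Ha4' => e34' J34'.
have /and3P [/eqP E14 /eqP E14' _] :=
  new_edges_sides Hcub Huniq Hd1' Hd4' J12 J23 J34 J21' J34' Hconn HA Hlt.
split.
- exact: (cut_split_off_lower Hcub Huniq Hd1' Hd4' J12 J23 J34 J21' J34' Hconn HA Hsize Hlt).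
- by rewrite cut_v1v4 E14 eqxx.
- by rewrite cut_v1'v4' E14' eqxx.
Qed.
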